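(* Let $(A,\mu_A)$, $(B,\mu_B)$ be associative algebras, $\alpha_A:A\to A$, $\alpha_B:B\to B$ bijective algebra endomorphisms, and $R:B\otimes A\to A\otimes B$ an $(\alpha_A,\alpha_B)$-twisting map, written $R(b\otimes a)=a_R\otimes b_R$. Then the linear map $T:(A\otimes B)\otimes(A\otimes B)\to(A\otimes B)\otimes(A\otimes B)$, $T((a\otimes b)\otimes(a'\otimes b'))=(\alpha_A(a)\otimes b_R)\otimes(a'_R\otimes\alpha_B(b'))$, is an $(\alpha_A\otimes\alpha_B)$-pseudotwistor for the associative tensor product algebra $A\otimes B$, with companions $\tilde T_1=T_{13}\circ(\alpha_A^{-1}\otimes\alpha_B^{-1}\otimes\mathrm{id}_A\otimes\mathrm{id}_B\otimes\mathrm{id}_A\otimes\mathrm{id}_B)$ and $\tilde T_2=T_{13}\circ(\mathrm{id}_A\otimes\mathrm{id}_B\otimes\mathrm{id}_A\otimes\mathrm{id}_B\otimes\alpha_A^{-1}\otimes\alpha_B^{-1})$. The resulting Hom-associative algebra $(A\otimes B)^T_{\alpha_A\otimes\alpha_B}$ has multiplication $(a\otimes b)(a'\otimes b')=\alpha_A(a)a'_R\otimes b_R\alpha_B(b')$ and structure map $\alpha_A\otimes\alpha_B$.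
   Context: Over a field $k$; algebras not assumed unital; $A\otimes B$ has product $(a\otimes b)(a'\otimes b')=aa'\otimes bb'$. An $(\alpha_A,\alpha_B)$-twisting map is a linear $R:B\otimes A\to A\otimes B$ with $(\alpha_A\otimes\alpha_B)\circ R=R\circ(\alpha_B\otimes\alpha_A)$, $R\circ(\mathrm{id}_B\otimes\mu_A)=(\mu_A\otimes\mathrm{id}_B)\circ(\mathrm{id}_A\otimes R)\circ(\mathrm{id}_A\otimes\alpha_B^{-1}\otimes\mathrm{id}_A)\circ(R\otimes\mathrm{id}_A)$, $R\circ(\mu_B\otimes\mathrm{id}_A)=(\mathrm{id}_A\otimes\mu_B)\circ(R\otimes\mathrm{id}_B)\circ(\mathrm{id}_B\otimes\alpha_A^{-1}\otimes\mathrm{id}_B)\circ(\mathrm{id}_B\otimes R)$. For an associative algebra $(D,\mu)$ with algebra endomorphism $\alpha$, an $\alpha$-pseudotwistor with companions $\tilde T_1,\tilde T_2$ is a linear $T:D\otimes D\to D\otimes D$ with linear $\tilde T_1,\tilde T_2:D^{\otimes3}\to D^{\otimes3}$ satisfying $(\alpha\otimes\alpha)\circ T=T\circ(\alpha\otimes\alpha)$, $T\circ(\mathrm{id}_D\otimes\mu)=(\mathrm{id}_D\otimes\mu)\circ\tilde T_1\circ(T\otimes\mathrm{id}_D)$, $T\circ(\mu\otimes\mathrm{id}_D)=(\mu\otimes\mathrm{id}_D)\circ\tilde T_2\circ(\mathrm{id}_D\otimes T)$, $\tilde T_1\circ(T\otimes\mathrm{id}_D)\circ(\alpha\otimes T)=\tilde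 T_2\circ(\mathrm{id}_D\otimes T)\circ(T\otimes\alpha)$; then $D^T_\alpha:=(D,\mu\circ T,\alpha)$ is Hom-associative ($\alpha(xy)=\alpha(x)\alpha(y)$, $\alpha(x)(yz)=(xy)\alpha(z)$). For $T$ written $T(d\otimes d')=d^T\otimes d'_T$ ($d,d'\in D=A\otimes B$), $T_{13}(d\otimes d'\otimes d'')=d^T\otimes d'\otimes d''_T$. *)

(* Tensor products of K-vector spaces are given by their
   universal property. *)
From HB Require Import structures.
From mathcomp Require Import all_boot all_algebra.

Set Implicit Arguments.
Unset Strict Implicit.
Unset Printing Implicit Defensive.

Import GRing.Theory.
Local Open Scope ring_scope.

Definition bilin (K : fieldType) (U V X : lmodType K) (f : U -> V -> X) : Prop :=
  (forall u, linear (f u)) /\ (forall v, linear (fun u => f u v)).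

Record tensor_product (K : fieldType) (U V : lmodType K) := TensorProduct {
  tcar : lmodType K;
  tens : U -> V -> tcar;
  tens_bilin : bilin tens;
  tlift : forall X : lmodType K, (U -> V -> X) -> tcar -> X;
  tlift_linear : forall (X : lmodType K) (f : U -> V -> X),
      bilin f -> linear (tlift f);
  tlift_tens : forall (X : lmodType K) (f : U -> V -> X),
      bilin f -> forall u v, tlift f (tens u v) = f u v;
  tens_ext : forall (X : lmodType K) (g h : tcar -> X),
      linear g -> linear h -> (forall u v, g (tens u v) = h (tens u v)) ->
      g =1 h
}.

Definition tensor_functor (K : fieldType) :=
  forall U V : lmodType K, tensor_product U V.

Section TensorOps.
Unset Implicit Arguments.
Context {K : fieldType} (tp : tensor_functor K).

Definition tT (U V : lmodType K) : lmodType K := tcar (tp U V).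
Definition tns {U V : lmodType K} (u : U) (v : V) : tT U V := tens (tp U V) u v.
Definition tlft {U V X : lmodType K} (f : U -> V -> X) : tT U V -> X :=
  @tlift K U V (tp U V) X f.
Definition tmap {U V U' V' : lmodType K} (f : U -> U') (g : V -> V') :
  tT U V -> tT U' V' := tlft (fun u v => tns (f u) (g v)).
Definition tassoc {U V W : lmodType K} : tT (tT U V) W -> tT U (tT V W) :=
  tlft (fun x w => tlft (fun u v => tns u (tns v w)) x).
Definition tassocV {U V W : lmodType K} : tT U (tT V W) -> tT (tT U V) W :=
  tlft (fun u y => tlft (fun v w => tns (tns u v) w) y).
Definition tlft22 {U V W Z X : lmodType K} (f : U -> V -> W -> Z -> X) :
  tT (tT U V) (tT W Z) -> X :=
  tlft (fun x y => tlft (fun u v => tlft (fun w z => f u v w z) y) x).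

Definition assoc_alg {A : lmodType K} (mu : tT A A -> A) : Prop :=
  linear mu /\ mu \o tmap mu id =1 mu \o tmap id mu \o tassoc.

Definition alg_endo {A : lmodType K} (mu : tT A A -> A) (alpha : A -> A) : Prop :=
  linear alpha /\ alpha \o mu =1 mu \o tmap alpha alpha.

(* (alphaA, alphaB)-twisting map R : B ⊗ A -> A ⊗ B; triple tensor products
   are bracketed on the left, (X ⊗ Y) ⊗ Z, and associators are inserted. *)
Definition twisting_map {A B : lmodType K}
  (muA : tT A A -> A) (muB : tT B B -> B)
  (alphaA alphaAi : A -> A) (alphaB alphaBi : B -> B)
  (R : tT B A -> tT A B) : Prop :=
  [/\ linear R,
      tmap alphaA alphaB \o R =1 R \o tmap alphaB alphaA,
      R \o tmap id muA \o tassoc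
        =1 tmap muA id \o tassocV \o tmap id R \o tassoc
           \o tmap (tmap id alphaBi) id \o tmap R id
    &
      R \o tmap muB id
        =1 tmap id muB \o tassoc \o tmap R id \o tassocV
           \o tmap id (tmap alphaAi id) \o tmap id R \o tassoc].

Definition pseudotwistor {D : lmodType K} (mu : tT D D -> D) (alpha : D -> D)
  (T : tT D D -> tT D D) (T1 T2 : tT (tT D D) D -> tT (tT D D) D) : Prop :=
  [/\ linear T /\ linear T1 /\ linear T2,
      tmap alpha alpha \o T =1 T \o tmap alpha alpha,
      T \o tmap id mu \o tassoc =1 tmap id mu \o tassoc \o T1 \o tmap T id,
      T \o tmap mu id =1 tmap mu id \o T2 \o tassocV \o tmap id T \o tassoc
    &
      T1 \o tmap T id \o tassocV \o tmap alpha T \o tassoc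
        =1 T2 \o tassocV \o tmap id T \o tassoc \o tmap T alpha].

Definition hom_assoc {D : Type} (m : D -> D -> D) (alpha : D -> D) : Prop :=
  (forall x y, alpha (m x y) = m (alpha x) (alpha y)) /\
  (forall x y z, m (alpha x) (m y z) = m (m x y) (alpha z)).

Definition tensor_alg_mul {A B : lmodType K} (muA : tT A A -> A) (muB : tT B B -> B) :
  tT (tT A B) (tT A B) -> tT A B :=
  tlft22 (fun a b a' b' => tns (muA (tns a a')) (muB (tns b b'))).

Definition twT {A B : lmodType K} (alphaA : A -> A) (alphaB : B -> B)
  (R : tT B A -> tT A B) : tT (tT A B) (tT A B) -> tT (tT A B) (tT A B) :=
  tlft22 (fun a b a' b' =>
    tlft (fun (x : A) (y : B) => tns (tns (alphaA a) y) (tns x (alphaB b')))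
         (R (tns b a'))).

Definition T13 {D : lmodType K} (T : tT D D -> tT D D) :
  tT (tT D D) D -> tT (tT D D) D :=
  tlft (fun p d'' => tlft (fun d d' =>
          tlft (fun e e'' => tns (tns e d') e'') (T (tns d d''))) p).

End TensorOps.

(* The identities are checked on pure tensors, by the universal property of
   the tensor product; each image R(b ⊗ a) is in turn expanded as a generic
   sum a_R ⊗ b_R, both sides of every identity being linear in it. On pure
   tensors, the invariance of R under alpha_A ⊗ alpha_B gives the commutation
   of T with alpha and the compatibility of the two companions, while the two
   multiplicativity axioms of R give the two factorisations of T through the
   product of A ⊗ B. Hom-associativity holds for the twist of any associative
   algebra by a pseudotwistor: alpha(x)(yz) and (xy)alpha(z) are obtained from
   the two sides of the compatibility axiom by the factorisation axioms and the
   associativity of mu. *)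

From HB Require Import structures.
From mathcomp Require Import all_boot all_algebra.

Set Implicit Arguments.
Unset Strict Implicit.
Unset Printing Implicit Defensive.

Import GRing.Theory.
Local Open Scope ring_scope.

Section TensorCalculus.
Context {K : fieldType} (tp : tensor_functor K).

Lemma linear_idfun (U : lmodType K) : linear (fun x : U => x).
Proof. by []. Qed.

Lemma linear_compfun (U V W : lmodType K) (f : V -> W) (g : U -> V) :
  linear f -> linear g -> linear (fun x => f (g x)).
Proof. by move=> lf lg a u v; rewrite lg lf. Qed.

Lemma tns_linearl (U V : lmodType K) (v : V) : linear (fun u : U => tns tp u v).
Proof. exact: (proj2 (tens_bilin (tp U V))). Qed.

Lemma tns_linearr (U V : lmodType K) (u : U) : linear (@tns K tp U V u).
Proof. exact: (proj1 (tens_bilin (tp U V))). Qed.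

Lemma tlft_linear (U V X : lmodType K) (f : U -> V -> X) :
  bilin f -> linear (tlft tp f).
Proof. exact: tlift_linear. Qed.

Lemma tlftE (U V X : lmodType K) (f : U -> V -> X) :
  bilin f -> forall u v, tlft tp f (tns tp u v) = f u v.
Proof. exact: tlift_tens. Qed.

Lemma tT_ext (U V X : lmodType K) (g h : tT tp U V -> X) :
  linear g -> linear h -> (forall u v, g (tns tp u v) = h (tns tp u v)) ->
  forall t, g t = h t.
Proof. exact: tens_ext. Qed.

Lemma tlft_linear_param (W U V X : lmodType K) (F : W -> U -> V -> X)
    (t : tT tp U V) :
  (forall w, bilin (F w)) -> (forall u v, linear (fun w => F w u v)) ->
  linear (fun w => tlft tp (F w) t).
Proof.
move=> bF lF a w1 w2; move: t; apply: tT_ext.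
- exact: tlft_linear.
- move=> c u v; rewrite !(tlft_linear (bF _)).
  rewrite !scalerDr !scalerA mulrC -!scalerA -!addrA; congr (_ + _).
  by rewrite addrCA.
- by move=> u v; rewrite !tlftE // lF.
Qed.

End TensorCalculus.

Ltac solve_linear :=
  match goal with
  | |- @GRing.linear_for _ _ _ _ (fun x => x) => apply: linear_idfun
  | |- @GRing.linear_for _ _ _ _ (fun x => ?phi (@?g x)) =>
      apply: (@linear_compfun _ _ _ _ phi g); [solve_linear_head | solve_linear]
  | |- @GRing.linear_for _ _ _ _ (fun x => @tns _ _ _ _ (@?g x) ?v) =>
      apply: (linear_compfun (tns_linearl _ v) (g := g)); solve_linear
  | |- @GRing.linear_for _ _ _ _ (fun x => @tlft _ _ _ _ _ (@?F x) ?t) =>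
      apply: (@tlft_linear_param _ _ _ _ _ _ F t);
        [intro; cbv beta; solve_bilin | intros; cbv beta; solve_linear]
  | |- @GRing.linear_for _ _ _ _ ?phi => solve_linear_head
  end
with solve_bilin := split; intros; cbv beta; solve_linear
with solve_linear_head :=
  first [assumption | apply: tns_linearr | apply: tlft_linear; solve_bilin].

Ltac tensor_eval_with rw :=
  repeat (first [rewrite tlftE; [|solve_bilin] | rw]); cbv beta.

(* Replaces [f w] by a generic pure tensor, which is legitimate when both
   sides of the goal are linear in [f w]. *)
Ltac expand_image_with f rw := match goal with |- context [f ?w] =>
  generalize (f w); apply: tT_ext;
    [solve [solve_linear] | solve [solve_linear] | intros; tensor_eval_with rw]
  end.

Ltac expand_vars_with rw := repeat intro; cbv beta; repeat match goal with
  | x : GRing.Lmodule.sort (tT _ _ _) |- _ =>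
      revert x; apply: tT_ext;
        [solve [solve_linear] | solve [solve_linear] | intros; tensor_eval_with rw]
  end.

Tactic Notation "tensor_ext" ident(x) ident(y) :=
  apply: tT_ext; [solve [solve_linear] | solve [solve_linear] | move=> x y; cbv beta].

Tactic Notation "tensor_simpl" := tensor_eval_with fail.
Tactic Notation "tensor_simpl" "using" constr(rules) :=
  tensor_eval_with ltac:(rewrite rules).
Tactic Notation "expand_image" constr(f) := expand_image_with f fail.
Tactic Notation "expand_image" constr(f) "using" constr(rules) :=
  expand_image_with f ltac:(rewrite rules).
Tactic Notation "expand_vars" := expand_vars_with fail.
Tactic Notation "expand_vars" "using" constr(rules) :=
  expand_vars_with ltac:(rewrite rules).

Section TensorMaps.
Context {K : fieldType} (tp : tensor_functor K).

Lemma tmapE (U V U' V' : lmodType K) (f : U -> U') (g : V -> V') u v :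
  linear f -> linear g -> tmap tp f g (tns tp u v) = tns tp (f u) (g v).
Proof. by move=> lf lg; rewrite /tmap; tensor_simpl. Qed.

Lemma tassocE (U V W : lmodType K) (u : U) (v : V) (w : W) :
  tassoc tp (tns tp (tns tp u v) w) = tns tp u (tns tp v w).
Proof. by rewrite /tassoc; tensor_simpl. Qed.

Lemma tassocK (U V W : lmodType K) : cancel (@tassocV K tp U V W) (tassoc tp).
Proof. by rewrite /tassoc /tassocV; expand_vars. Qed.

End TensorMaps.

Section PseudotwistorHomAssoc.
Context {K : fieldType} (tp : tensor_functor K) (D : lmodType K).
Variables (mu : tT tp D D -> D) (alpha : D -> D) (T : tT tp D D -> tT tp D D).
Variables (T1 T2 : tT tp (tT tp D D) D -> tT tp (tT tp D D) D).
Hypotheses (mu_assoc : assoc_alg tp mu) (alpha_endo : alg_endo tp mu alpha).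
Hypothesis (T_pseudo : pseudotwistor tp mu alpha T T1 T2).

Lemma pseudotwistor_hom_assoc : hom_assoc (fun x y => mu (T (tns tp x y))) alpha.
Proof.
have [lmu muA] := mu_assoc; have [lalpha alphaM] := alpha_endo.
have [[lT _] Talpha TmulR TmulL Tcompat] := T_pseudo.
rewrite /hom_assoc; split=> [x y | x y z] /=.
  have /= -> := alphaM (T (tns tp x y)).
  by have /= -> := Talpha (tns tp x y); rewrite tmapE.
set w := tassocV tp (tns tp (alpha x) (T (tns tp y z))).
have Tw : T1 (tmap tp T id w) =
    T2 (tassocV tp (tmap tp id T (tassoc tp (tns tp (T (tns tp x y)) (alpha z))))).
  have /= := Tcompat (tns tp (tns tp x y) z).
  by rewrite tassocE !tmapE.
have -> : tns tp (alpha x) (mu (T (tns tp y z)))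
           = tmap tp id mu (tassoc tp w) by rewrite tassocK tmapE.
have /= -> := TmulR w; have /= <- := muA (T1 (tmap tp T id w)); rewrite Tw.
have /= <- := TmulL (tns tp (T (tns tp x y)) (alpha z)).
by rewrite tmapE.
Qed.

End PseudotwistorHomAssoc.

Section TensorAlgebra.
Context {K : fieldType} (tp : tensor_functor K).

Lemma assoc_algE (A : lmodType K) (mu : tT tp A A -> A) : assoc_alg tp mu ->
  forall x y z, mu (tns tp (mu (tns tp x y)) z) = mu (tns tp x (mu (tns tp y z))).
Proof.
case=> lmu muA x y z; have /= := muA (tns tp (tns tp x y) z).
by rewrite tassocE !tmapE.
Qed.

Lemma alg_endoE (A : lmodType K) (mu : tT tp A A -> A) (alpha : A -> A) :
  alg_endo tp mu alpha ->
  forall x y, alpha (mu (tns tp x y)) = mu (tns tp (alpha x) (alpha y)).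
Proof. by case=> lalpha alphaM x y; have /= := alphaM (tns tp x y); rewrite tmapE. Qed.

Variables (A B : lmodType K) (muA : tT tp A A -> A) (muB : tT tp B B -> B).

Lemma tensor_alg_assoc : assoc_alg tp muA -> assoc_alg tp muB ->
  assoc_alg tp (tensor_alg_mul tp muA muB).
Proof.
move=> /[dup] [[lmuA _]] /assoc_algE assA /[dup] [[lmuB _]] /assoc_algE assB.
rewrite /assoc_alg /tensor_alg_mul /tlft22 /tmap /tassoc /comp.
by split; [solve_linear | expand_vars using (assA, assB)].
Qed.

Lemma tensor_alg_endo (alphaA : A -> A) (alphaB : B -> B) :
  linear muA -> linear muB -> alg_endo tp muA alphaA -> alg_endo tp muB alphaB ->
  alg_endo tp (tensor_alg_mul tp muA muB) (tmap tp alphaA alphaB).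
Proof.
move=> lmuA lmuB /[dup] [[laA _]] /alg_endoE endA /[dup] [[laB _]] /alg_endoE endB.
rewrite /alg_endo /tensor_alg_mul /tlft22 /tmap /comp.
by split; [solve_linear | expand_vars using (endA, endB)].
Qed.

End TensorAlgebra.

Lemma can2_linear_fun (K : fieldType) (U V : lmodType K) (f : U -> V) (g : V -> U) :
  linear f -> cancel f g -> cancel g f -> linear g.
Proof. by move=> lf fK gK a u v; apply: (can_inj fK); rewrite lf !gK. Qed.

Section TwistedTensorProduct.
Context {K : fieldType} (tp : tensor_functor K) (A B : lmodType K).
Variables (muA : tT tp A A -> A) (muB : tT tp B B -> B).
Variables (alphaA alphaAi : A -> A) (alphaB alphaBi : B -> B).
Variable R : tT tp B A -> tT tp A B.
Hypotheses (muA_assoc : assoc_alg tp muA) (muB_assoc : assoc_alg tp muB).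
Hypotheses (alphaA_endo : alg_endo tp muA alphaA) (alphaB_endo : alg_endo tp muB alphaB).
Hypotheses (alphaAK : cancel alphaA alphaAi) (alphaAiK : cancel alphaAi alphaA).
Hypotheses (alphaBK : cancel alphaB alphaBi) (alphaBiK : cancel alphaBi alphaB).
Hypothesis R_twisting : twisting_map tp muA muB alphaA alphaAi alphaB alphaBi R.

Let lmuA : linear muA := proj1 muA_assoc.
Let lmuB : linear muB := proj1 muB_assoc.
Let lalphaA : linear alphaA := proj1 alphaA_endo.
Let lalphaB : linear alphaB := proj1 alphaB_endo.
Let lalphaAi : linear alphaAi := can2_linear_fun lalphaA alphaAK alphaAiK.
Let lalphaBi : linear alphaBi := can2_linear_fun lalphaB alphaBK alphaBiK.
Let lR : linear R. Proof. by case: R_twisting. Qed.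

Lemma twisting_alpha b a :
  R (tns tp (alphaB b) (alphaA a))
  = tlft tp (fun x y => tns tp (alphaA x) (alphaB y)) (R (tns tp b a)).
Proof.
case: R_twisting => _ R_alpha _ _; have /= := R_alpha (tns tp b a).
by rewrite !tmapE.
Qed.

Lemma twisting_mulA b a a' :
  R (tns tp b (muA (tns tp a a')))
  = tlft tp (fun x y => tlft tp (fun x' y' => tns tp (muA (tns tp x x')) y')
                                 (R (tns tp (alphaBi y) a')))
            (R (tns tp b a)).
Proof.
case: R_twisting => _ _ R_mulA _; have := R_mulA (tns tp (tns tp b a) a').
rewrite /comp /tmap /tassoc /tassocV; tensor_simpl => ->.
by repeat expand_image R.
Qed.

Lemma twisting_mulB b b' a :
  R (tns tp (muB (tns tp b b')) a)
  = tlft tp (fun x y => tlft tp (fun x' y' => tns tp x' (muB (tns tp y' y)))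
                                 (R (tns tp b (alphaAi x))))
            (R (tns tp b' a)).
Proof.
case: R_twisting => _ _ _ R_mulB; have := R_mulB (tns tp (tns tp b b') a).
rewrite /comp /tmap /tassoc /tassocV; tensor_simpl => ->.
by repeat expand_image R.
Qed.

Local Notation muD := (tensor_alg_mul tp muA muB).
Local Notation alpha := (tmap tp alphaA alphaB).
Local Notation T := (twT tp alphaA alphaB R).
Local Notation T1 := (T13 tp T \o tmap tp (tmap tp (tmap tp alphaAi alphaBi) id) id).
Local Notation T2 := (T13 tp T \o tmap tp (tmap tp id id) (tmap tp alphaAi alphaBi)).

Lemma twT_alpha : tmap tp alpha alpha \o T =1 T \o tmap tp alpha alpha.
Proof.
rewrite /twT /tlft22 /tmap /comp.
by expand_vars using twisting_alpha; repeat expand_image R using twisting_alpha.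
Qed.

Lemma twT_mulr :
  T \o tmap tp id muD \o tassoc tp =1 tmap tp id muD \o tassoc tp \o T1 \o tmap tp T id.
Proof.
have endB := alg_endoE alphaB_endo.
rewrite /twT /T13 /tensor_alg_mul /tlft22 /tmap /tassoc /comp.
by expand_vars using (twisting_mulA, endB, alphaAiK);
  repeat expand_image R using (twisting_mulA, endB, alphaAiK).
Qed.

Lemma twT_mull :
  T \o tmap tp muD id =1 tmap tp muD id \o T2 \o tassocV tp \o tmap tp id T \o tassoc tp.
Proof.
have endA := alg_endoE alphaA_endo.
rewrite /twT /T13 /tensor_alg_mul /tlft22 /tmap /tassoc /tassocV /comp.
by expand_vars using (twisting_mulB, endA, alphaBiK);
  repeat expand_image R using (twisting_mulB, endA, alphaBiK).
Qed.

Lemma twT_compat :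
  T1 \o tmap tp T id \o tassocV tp \o tmap tp alpha T \o tassoc tp
  =1 T2 \o tassocV tp \o tmap tp id T \o tassoc tp \o tmap tp T alpha.
Proof.
rewrite /twT /T13 /tlft22 /tmap /tassoc /tassocV /comp => t.
move: t; tensor_ext p d''; move: d''; tensor_ext a'' b''.
move: p; tensor_ext d d'; move: d'; tensor_ext a' b'; move: d; tensor_ext a b.
tensor_simpl using (twisting_alpha, alphaAK, alphaBK).
(* Each side involves only some of the instances of R occurring here, so
   the two sides are compared through their common expansion. *)
transitivity (tlft tp (fun x2 y2 => tlft tp (fun x1 y1 => tlft tp (fun x3 y3 =>
    tns tp (tns tp (tns tp (alphaA (alphaA a)) y3) (tns tp (alphaA x2) (alphaB y1)))
           (tns tp x3 (alphaB (alphaB b''))))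
    (R (tns tp y2 x1))) (R (tns tp b' a''))) (R (tns tp b a'))).
  by repeat expand_image R using (twisting_alpha, alphaAK, alphaBK).
by repeat expand_image R using (twisting_alpha, alphaAK, alphaBK).
Qed.

Lemma twT_mul_tns (a a' : A) (b b' : B) :
  muD (T (tns tp (tns tp a b) (tns tp a' b')))
  = tlft tp (fun x y => tns tp (muA (tns tp (alphaA a) x)) (muB (tns tp y (alphaB b'))))
         (R (tns tp b a')).
Proof. by rewrite /twT /tensor_alg_mul /tlft22; tensor_simpl; expand_image R. Qed.

Lemma twT_pseudotwistor : pseudotwistor tp muD alpha T T1 T2.
Proof.
split; [|exact: twT_alpha|exact: twT_mulr|exact: twT_mull|exact: twT_compat].
by rewrite /twT /T13 /tlft22 /tmap /comp; split; [|split]; solve_linear.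
Qed.

End TwistedTensorProduct.

Theorem proposition4p4 (K : fieldType) (tp : tensor_functor K)
  (A B : lmodType K) (muA : tT tp A A -> A) (muB : tT tp B B -> B)
  (alphaA alphaAi : A -> A) (alphaB alphaBi : B -> B)
  (R : tT tp B A -> tT tp A B) :
  assoc_alg tp muA -> assoc_alg tp muB ->
  alg_endo tp muA alphaA -> alg_endo tp muB alphaB ->
  cancel alphaA alphaAi -> cancel alphaAi alphaA ->
  cancel alphaB alphaBi -> cancel alphaBi alphaB ->
  twisting_map tp muA muB alphaA alphaAi alphaB alphaBi R ->
  let muD := tensor_alg_mul tp muA muB in
  let alpha := tmap tp alphaA alphaB in
  let T := twT tp alphaA alphaB R in
  pseudotwistor tp muD alpha T
    (T13 tp T \o tmap tp (tmap tp (tmap tp alphaAi alphaBi) id) id)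
    (T13 tp T \o tmap tp (tmap tp id id) (tmap tp alphaAi alphaBi))
  /\ hom_assoc (fun x y => muD (T (tns tp x y))) alpha
  /\ (forall (a a' : A) (b b' : B),
        muD (T (tns tp (tns tp a b) (tns tp a' b')))
        = tlft tp (fun (x : A) (y : B) =>
                     tns tp (muA (tns tp (alphaA a) x)) (muB (tns tp y (alphaB b'))))
               (R (tns tp b a'))).
Proof.
move=> muA_assoc muB_assoc alphaA_endo alphaB_endo alphaAK alphaAiK alphaBK alphaBiK
  R_twisting; cbv zeta.
have T_pseudo := twT_pseudotwistor muA_assoc muB_assoc alphaA_endo alphaB_endo
  alphaAK alphaAiK alphaBK alphaBiK R_twisting.
split; first exact: T_pseudo.
split; last exact: twT_mul_tns muA_assoc muB_assoc alphaA_endo alphaB_endo R_twisting.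
apply: pseudotwistor_hom_assoc T_pseudo; first exact: tensor_alg_assoc.
by apply: tensor_alg_endo; [case: muA_assoc | case: muB_assoc | |].
Qed.
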